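(* Let $h\in\widehat{\operatorname{IET}^{\bowtie}}$. Then there exist $f,g\in\widehat{\operatorname{IET}^{+}_{\mathrm{rc}}}$, finite products of flips $r,s$, and finitely supported permutations $\sigma,\tau$ of $[0,1[$ such that $h=r\sigma f=g\tau s$.
   Context: $X=[0,1[$. $\widehat{\operatorname{IET}^{\bowtie}}$ is the group of bijections $f:X\to X$ for which there is a finite partition of $X$ into intervals $[a,b[$ such that on each open interval $]a,b[$, $f$ is of the form $x\mapsto x+c$ or $x\mapsto -x+c$. $\widehat{\operatorname{IET}^{+}}$ is the subgroup of those for which only the form $x\mapsto x+c$ occurs, and $\widehat{\operatorname{IET}^{+}_{\mathrm{rc}}}$ is the subgroup of right-continuous elements of $\widehat{\operatorname{IET}^{+}}$. For a nonempty interval $I=[a,b[\subseteq X$, the $I$-flip is the bijection of $X$ which maps $x\mapsto a+b-x$ on $]a,b[$ and fixes every other point of $X$ (including $a$); a flip is an $I$-flip for some such $I$. *)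

From Stdlib Require Import Reals List.
Open Scope R_scope.

Definition inX (x : R) : Prop := 0 <= x < 1.

(* f : R -> R, restricted to X, is a bijection X -> X (values off X are irrelevant). *)
Definition bijX (f : R -> R) : Prop :=
  (forall x, inX x -> inX (f x)) /\
  (forall x y, inX x -> inX y -> f x = f y -> x = y) /\
  (forall y, inX y -> exists x, inX x /\ f x = y).

Definition partitionX (n : nat) (a : nat -> R) : Prop :=
  a 0%nat = 0 /\ a n = 1 /\ (forall i, (i < n)%nat -> a i < a (S i)).

Definition IET_bowtie (f : R -> R) : Prop :=
  bijX f /\
  exists n a, partitionX n a /\
    forall i, (i < n)%nat -> exists c,
      (forall x, a i < x < a (S i) -> f x = x + c) \/
      (forall x, a i < x < a (S i) -> f x = - x + c).

Definition IET_plus (f : R -> R) : Prop :=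
  bijX f /\
  exists n a, partitionX n a /\
    forall i, (i < n)%nat -> exists c,
      (forall x, a i < x < a (S i) -> f x = x + c).

Definition right_continuous_X (f : R -> R) : Prop :=
  forall x, inX x -> forall eps, 0 < eps -> exists delta, 0 < delta /\
    forall y, inX y -> x <= y < x + delta -> Rabs (f y - f x) < eps.

Definition IET_plus_rc (f : R -> R) : Prop := IET_plus f /\ right_continuous_X f.

Definition flip (a b : R) (x : R) : R :=
  if Rlt_dec a x then (if Rlt_dec x b then a + b - x else x) else x.

(* a flip is an I-flip for a nonempty interval I = [a,b[ included in X *)
Definition valid_interval (p : R * R) : Prop :=
  0 <= fst p /\ fst p < snd p /\ snd p <= 1.

(* composition of the flips in the list (head is applied last) *)
Definition flips_prod (l : list (R * R)) (x : R) : R :=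
  fold_right (fun p y => flip (fst p) (snd p) y) x l.

Definition flip_product (r : R -> R) : Prop :=
  exists l : list (R * R), Forall valid_interval l /\
    forall x, inX x -> r x = flips_prod l x.

Definition fin_supp_perm (s : R -> R) : Prop :=
  bijX s /\ exists L : list R, forall x, inX x -> s x <> x -> In x L.

From Stdlib Require Import Reals List Lra Lia ClassicalEpsilon.
Open Scope R_scope.

(* On every orientation-reversing piece, either precompose h with the flip of
   the piece or postcompose it with the flip of the image of the piece.  Distinct
   pieces, and their images, are disjoint, so these flips pairwise commute and their
   products s and r are involutions with h s and r h in IET^+; thus
   h = (h s) s = r (r h).  An element k of IET^+ coincides with its
   right-continuous modification k_rc, an element of IET^+_rc, outside the
   finitely many cut points, so k k_rc^-1 and k_rc^-1 k are finitely supported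
   permutations, and k = (k k_rc^-1) k_rc = k_rc (k_rc^-1 k). *)

Section Partition.

Variables (n : nat) (a : nat -> R).
Hypothesis Hpart : partitionX n a.

Lemma partition_lt i j : (i < j <= n)%nat -> a i < a j.
Proof.
  destruct Hpart as [_ [_ Hstep]].
  induction j as [|j IH]; intros Hij; [lia|].
  destruct (Nat.eq_dec i j) as [->|Hne]; [apply Hstep; lia|].
  apply Rlt_trans with (a j); [apply IH; lia | apply Hstep; lia].
Qed.

Lemma partition_le i j : (i <= j <= n)%nat -> a i <= a j.
Proof.
  intros Hij. destruct (Nat.eq_dec i j) as [->|Hne]; [lra|].
  left; apply partition_lt; lia.
Qed.

Lemma partition_piece_inX i x : (i < n)%nat -> a i <= x < a (S i) -> inX x.
Proof.
  intros Hi Hx. destruct Hpart as [H0 [Hn _]].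
  pose proof (partition_le 0 i ltac:(lia)). pose proof (partition_le (S i) n ltac:(lia)).
  unfold inX; lra.
Qed.

Lemma partition_cover x : inX x -> exists i, (i < n)%nat /\ a i <= x < a (S i).
Proof.
  intros Hx. unfold inX in Hx. destruct Hpart as [H0 [Hn _]].
  assert (Hcover : forall m, (m <= n)%nat -> x < a m ->
            exists i, (i < m)%nat /\ a i <= x < a (S i)).
  { induction m as [|m IH]; intros Hm Hxm; [lra|].
    destruct (Rlt_or_le x (a m)) as [Hlt|Hge].
    - destruct (IH ltac:(lia) Hlt) as [i [Hi Hxi]]. exists i; split; [lia|exact Hxi].
    - exists m; split; [lia|lra]. }
  destruct (Hcover n (le_n n) ltac:(lra)) as [i [Hi Hxi]]. exists i; auto.
Qed.

Lemma partition_piece_unique i j x : (i < n)%nat -> (j < n)%nat ->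
  a i < x < a (S i) -> a j < x < a (S j) -> i = j.
Proof.
  intros Hi Hj Hxi Hxj. destruct (Nat.lt_total i j) as [Hlt|[Heq|Hgt]]; [|exact Heq|].
  - pose proof (partition_le (S i) j ltac:(lia)). lra.
  - pose proof (partition_le (S j) i ltac:(lia)). lra.
Qed.

End Partition.

Lemma bijX_inX f x : bijX f -> inX x -> inX (f x).
Proof. intros [Hf _]. apply Hf. Qed.

Lemma bijX_inj f x y : bijX f -> inX x -> inX y -> f x = f y -> x = y.
Proof. intros [_ [Hf _]]. apply Hf. Qed.

Definition invX (f : R -> R) (y : R) : R :=
  epsilon (inhabits 0) (fun x => inX x /\ f x = y).

Lemma invX_spec f y : bijX f -> inX y -> inX (invX f y) /\ f (invX f y) = y.
Proof. intros [_ [_ Hsurj]] Hy. unfold invX. apply epsilon_spec, Hsurj, Hy. Qed.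

Lemma invX_l f x : bijX f -> inX x -> invX f (f x) = x.
Proof.
  intros Hf Hx. destruct (invX_spec f (f x) Hf (bijX_inX f x Hf Hx)) as [Hinv Heq].
  exact (bijX_inj f _ _ Hf Hinv Hx Heq).
Qed.

Lemma bijX_comp f g : bijX f -> bijX g -> bijX (fun x => f (g x)).
Proof.
  intros [Mf [If Sf]] [Mg [Ig Sg]]. split; [|split].
  - intros x Hx; auto.
  - intros x y Hx Hy E. apply Ig; auto.
  - intros y Hy. destruct (Sf y Hy) as [x1 [H1 <-]]. destruct (Sg x1 H1) as [x [Hx <-]].
    exists x; auto.
Qed.

Lemma bijX_invX f : bijX f -> bijX (invX f).
Proof.
  intros Hf. split; [|split].
  - intros y Hy. apply (invX_spec f y Hf Hy).
  - intros x y Hx Hy E.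
    rewrite <- (proj2 (invX_spec f x Hf Hx)), <- (proj2 (invX_spec f y Hf Hy)), E.
    reflexivity.
  - intros x Hx. exists (f x). split; [apply bijX_inX|apply invX_l]; assumption.
Qed.

Lemma involutive_bijX r : (forall x, inX x -> inX (r x)) -> (forall x, r (r x) = x) -> bijX r.
Proof.
  intros Hr Hinv. split; [exact Hr|split].
  - intros x y _ _ E. rewrite <- (Hinv x), <- (Hinv y), E. reflexivity.
  - intros y Hy. exists (r y); auto.
Qed.

Lemma fin_supp_perm_comp_invX f k (L : list R) : bijX f -> bijX k ->
  (forall x, inX x -> f x <> k x -> In x L) -> fin_supp_perm (fun y => k (invX f y)).
Proof.
  intros Hf Hk HL. split; [apply bijX_comp; [exact Hk | apply bijX_invX, Hf]|].
  exists (map f L). intros y Hy Hne.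
  destruct (invX_spec f y Hf Hy) as [Hx Hfx].
  apply in_map_iff. exists (invX f y). split; [exact Hfx|].
  apply HL; [exact Hx|]. intros E. apply Hne. congruence.
Qed.

Lemma fin_supp_perm_invX_comp f k (L : list R) : bijX f -> bijX k ->
  (forall x, inX x -> f x <> k x -> In x L) -> fin_supp_perm (fun x => invX f (k x)).
Proof.
  intros Hf Hk HL. split; [apply bijX_comp; [apply bijX_invX, Hf | exact Hk]|].
  exists L. intros x Hx Hne. apply HL; [exact Hx|].
  intros E. apply Hne. rewrite <- E. apply invX_l; assumption.
Qed.

Definition disjoint (p q : R * R) : Prop :=
  forall x, ~ (fst p < x < snd p /\ fst q < x < snd q).

Lemma ForallOrdPairs_map {A B : Type} (Rel : B -> B -> Prop) (F : A -> B) (l : list A) :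
  NoDup l -> (forall i j, In i l -> In j l -> i <> j -> Rel (F i) (F j)) ->
  ForallOrdPairs Rel (map F l).
Proof.
  induction 1 as [|i l Hi Hnodup IH]; intros HF; simpl; constructor.
  - apply Forall_forall. intros q Hq. apply in_map_iff in Hq as [j [<- Hj]].
    apply HF; [left; reflexivity | right; exact Hj | intros ->; contradiction].
  - apply IH. intros j j' Hj Hj' Hne. apply HF; [right..|]; assumption.
Qed.

Lemma flips_prod_cons p l x : flips_prod (p :: l) x = flip (fst p) (snd p) (flips_prod l x).
Proof. reflexivity. Qed.

Lemma flips_prod_out l x : (forall p, In p l -> ~ (fst p < x < snd p)) -> flips_prod l x = x.
Proof.
  induction l as [|p l IH]; intros Hout; [reflexivity|].
  rewrite flips_prod_cons, IH by (intros q Hq; apply Hout; right; exact Hq).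
  pose proof (Hout p (or_introl eq_refl)).
  unfold flip. destruct (Rlt_dec (fst p) x); [destruct (Rlt_dec x (snd p))|]; lra.
Qed.

Lemma flips_prod_in l p x : ForallOrdPairs disjoint l -> In p l -> fst p < x < snd p ->
  flips_prod l x = fst p + snd p - x.
Proof.
  intros Hdisj. induction Hdisj as [|q l Hq Hdisj IH]; intros Hp Hx; [destruct Hp|].
  rewrite Forall_forall in Hq. rewrite flips_prod_cons. destruct Hp as [<-|Hp].
  - rewrite flips_prod_out by (intros p Hp Hxp; apply (Hq p Hp x); auto).
    unfold flip. destruct (Rlt_dec (fst q) x); [destruct (Rlt_dec x (snd q))|]; lra.
  - rewrite (IH Hp Hx). pose proof (Hq p Hp (fst p + snd p - x)).
    unfold flip. destruct (Rlt_dec (fst q) _); [destruct (Rlt_dec _ (snd q))|]; lra.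
Qed.

Lemma flips_prod_cases l x : ForallOrdPairs disjoint l ->
  (exists p, In p l /\ fst p < x < snd p /\ flips_prod l x = fst p + snd p - x) \/
  flips_prod l x = x.
Proof.
  intros Hdisj.
  destruct (excluded_middle_informative (exists p, In p l /\ fst p < x < snd p))
    as [[p [Hp Hx]]|Hout].
  - left. exists p. repeat split; try apply flips_prod_in; tauto.
  - right. apply flips_prod_out. intros p Hp Hx. apply Hout. exists p; auto.
Qed.

Lemma flips_prod_involutive l x : ForallOrdPairs disjoint l -> flips_prod l (flips_prod l x) = x.
Proof.
  intros Hdisj. destruct (flips_prod_cases l x Hdisj) as [[p [Hp [Hx ->]]]|Hfix].
  - rewrite (flips_prod_in l p); [ring | exact Hdisj | exact Hp | lra].
  - rewrite !Hfix. reflexivity.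
Qed.

Lemma flips_prod_inX l x : Forall valid_interval l -> ForallOrdPairs disjoint l ->
  inX x -> inX (flips_prod l x).
Proof.
  intros Hvalid Hdisj Hx. rewrite Forall_forall in Hvalid.
  destruct (flips_prod_cases l x Hdisj) as [[p [Hp [Hxp ->]]]| ->]; [|exact Hx].
  destruct (Hvalid p Hp) as [Hl [_ Hu]]. unfold inX. lra.
Qed.

Lemma bijX_flips_prod l : Forall valid_interval l -> ForallOrdPairs disjoint l ->
  bijX (flips_prod l).
Proof.
  intros Hvalid Hdisj. apply involutive_bijX.
  - intros x. apply flips_prod_inX; assumption.
  - intros x. apply flips_prod_involutive, Hdisj.
Qed.

Lemma le_of_open_interval l u b : l < u -> (forall x, l < x < u -> x <= b) -> u <= b.
Proof.
  intros Hlu Hb. destruct (Rle_or_lt u b) as [Hub|Hbu]; [exact Hub|exfalso].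
  pose proof (Rmax_l l b). pose proof (Rmax_r l b).
  pose proof (Rmax_lub_lt l b u Hlu Hbu).
  pose proof (Hb ((Rmax l b + u) / 2) ltac:(lra)). lra.
Qed.

Lemma ge_of_open_interval l u b : l < u -> (forall x, l < x < u -> b <= x) -> b <= l.
Proof.
  intros Hlu Hb. destruct (Rle_or_lt b l) as [Hbl|Hlb]; [exact Hbl|exfalso].
  pose proof (Rmin_l u b). pose proof (Rmin_r u b).
  pose proof (Rmin_glb_lt u b l Hlu Hlb).
  pose proof (Hb ((l + Rmin u b) / 2) ltac:(lra)). lra.
Qed.

Lemma valid_interval_of_inX l u : l < u -> (forall x, l < x < u -> inX x) ->
  valid_interval (l, u).
Proof.
  intros Hlu Hin. unfold valid_interval, inX in *; simpl. split; [|split; [exact Hlu|]].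
  - apply (ge_of_open_interval l u); [exact Hlu|]. intros x Hx. apply (Hin x Hx).
  - apply (le_of_open_interval l u); [exact Hlu|]. intros x Hx. destruct (Hin x Hx); lra.
Qed.

Section Unflipping.

Variables (h : R -> R) (n : nat) (a : nat -> R) (o : nat -> bool) (c : nat -> R).
Hypothesis Hbij : bijX h.
Hypothesis Hpart : partitionX n a.
Hypothesis Hpieces : forall i x, (i < n)%nat -> a i < x < a (S i) ->
  h x = (if o i then - x else x) + c i.

Definition reversed : list nat := filter o (seq 0 n).
Definition domain_flips : list (R * R) := map (fun i => (a i, a (S i))) reversed.
Definition image_flips : list (R * R) := map (fun i => (c i - a (S i), c i - a i)) reversed.

Lemma In_reversed i : In i reversed <-> (i < n)%nat /\ o i = true.
Proof. unfold reversed. rewrite filter_In, in_seq. intuition lia. Qed.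

Lemma reversed_piece_image j y : In j reversed -> c j - a (S j) < y < c j - a j ->
  a j < c j - y < a (S j) /\ h (c j - y) = y.
Proof.
  intros [Hj Hoj]%In_reversed Hy. split; [lra|].
  rewrite (Hpieces j (c j - y) Hj ltac:(lra)), Hoj. ring.
Qed.

Lemma domain_flips_disjoint : ForallOrdPairs disjoint domain_flips.
Proof.
  apply ForallOrdPairs_map; [apply NoDup_filter, seq_NoDup|].
  intros i j Hi Hj Hne x [Hxi Hxj]; simpl in *.
  apply In_reversed in Hi as [Hi _], Hj as [Hj _].
  exact (Hne (partition_piece_unique n a Hpart i j x Hi Hj Hxi Hxj)).
Qed.

Lemma image_flips_disjoint : ForallOrdPairs disjoint image_flips.
Proof.
  apply ForallOrdPairs_map; [apply NoDup_filter, seq_NoDup|].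
  intros i j Hi Hj Hne y [Hyi Hyj]; simpl in *.
  destruct (reversed_piece_image i y Hi Hyi) as [Hxi Hhi].
  destruct (reversed_piece_image j y Hj Hyj) as [Hxj Hhj].
  apply In_reversed in Hi as [Hi _], Hj as [Hj _].
  assert (Hsame : c i - y = c j - y).
  { apply (bijX_inj h); [exact Hbij | | | congruence].
    - apply (partition_piece_inX n a Hpart i); [exact Hi | lra].
    - apply (partition_piece_inX n a Hpart j); [exact Hj | lra]. }
  rewrite Hsame in Hxi.
  exact (Hne (partition_piece_unique n a Hpart i j _ Hi Hj Hxi Hxj)).
Qed.

Lemma domain_flips_valid : Forall valid_interval domain_flips.
Proof.
  apply Forall_forall. intros p Hp. apply in_map_iff in Hp as [i [<- Hi]].
  apply In_reversed in Hi as [Hi _].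
  apply valid_interval_of_inX; [apply (partition_lt n a Hpart); lia|].
  intros x Hx. apply (partition_piece_inX n a Hpart i); [exact Hi | lra].
Qed.

Lemma image_flips_valid : Forall valid_interval image_flips.
Proof.
  apply Forall_forall. intros p Hp. apply in_map_iff in Hp as [i [<- Hi]].
  pose proof (proj1 (In_reversed i) Hi) as [Hin _].
  pose proof (partition_lt n a Hpart i (S i) ltac:(lia)).
  apply valid_interval_of_inX; [lra|].
  intros y Hy. destruct (reversed_piece_image i y Hi Hy) as [Hx <-].
  apply (bijX_inX h); [exact Hbij|]. apply (partition_piece_inX n a Hpart i); [exact Hin | lra].
Qed.

Lemma domain_flips_on_piece i x : (i < n)%nat -> a i < x < a (S i) ->
  flips_prod domain_flips x = if o i then a i + a (S i) - x else x.
Proof.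
  intros Hi Hx. destruct (o i) eqn:Hoi.
  - apply (flips_prod_in _ (a i, a (S i))); [apply domain_flips_disjoint | | simpl; lra].
    apply in_map_iff. exists i. split; [reflexivity|]. apply In_reversed; auto.
  - apply flips_prod_out. intros p Hp Hxp. apply in_map_iff in Hp as [j [<- Hj]].
    apply In_reversed in Hj as [Hj Hoj]. simpl in Hxp.
    assert (j = i) as -> by exact (partition_piece_unique n a Hpart j i x Hj Hi Hxp Hx).
    congruence.
Qed.

Lemma image_flips_on_piece i x : (i < n)%nat -> a i < x < a (S i) ->
  flips_prod image_flips (h x) = if o i then x + c i - a i - a (S i) else h x.
Proof.
  intros Hi Hx. rewrite (Hpieces i x Hi Hx). destruct (o i) eqn:Hoi.
  - rewrite (flips_prod_in _ (c i - a (S i), c i - a i)); [simpl; ring | apply image_flips_disjoint | | simpl; lra].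
    apply in_map_iff. exists i. split; [reflexivity|]. apply In_reversed; auto.
  - apply flips_prod_out. intros p Hp Hy. apply in_map_iff in Hp as [j [<- Hj]]. simpl in Hy.
    destruct (reversed_piece_image j _ Hj Hy) as [Hxj Hhj].
    apply In_reversed in Hj as [Hj Hoj].
    (* h is injective and already takes the value x + c i at x *)
    assert (Hpre : c j - (x + c i) = x).
    { apply (bijX_inj h); [exact Hbij | | |].
      - apply (partition_piece_inX n a Hpart j); [exact Hj | lra].
      - apply (partition_piece_inX n a Hpart i); [exact Hi | lra].
      - rewrite Hhj, (Hpieces i x Hi Hx), Hoi. reflexivity. }
    rewrite Hpre in Hxj.
    assert (j = i) as -> by exact (partition_piece_unique n a Hpart j i x Hj Hi Hxj Hx).
    congruence.
Qed.

Lemma IET_plus_comp_domain_flips : IET_plus (fun x => h (flips_prod domain_flips x)).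
Proof.
  split.
  { apply bijX_comp; [exact Hbij|].
    apply bijX_flips_prod; [apply domain_flips_valid | apply domain_flips_disjoint]. }
  exists n, a. split; [exact Hpart|]. intros i Hi.
  exists (if o i then c i - a i - a (S i) else c i). intros x Hx.
  rewrite (domain_flips_on_piece i x Hi Hx). destruct (o i) eqn:Hoi.
  - rewrite (Hpieces i (a i + a (S i) - x) Hi ltac:(lra)), Hoi. ring.
  - rewrite (Hpieces i x Hi Hx), Hoi. reflexivity.
Qed.

Lemma IET_plus_image_flips_comp : IET_plus (fun x => flips_prod image_flips (h x)).
Proof.
  split.
  { apply bijX_comp; [|exact Hbij].
    apply bijX_flips_prod; [apply image_flips_valid | apply image_flips_disjoint]. }
  exists n, a. split; [exact Hpart|]. intros i Hi.
  exists (if o i then c i - a i - a (S i) else c i). intros x Hx.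
  rewrite (image_flips_on_piece i x Hi Hx). destruct (o i) eqn:Hoi.
  - ring.
  - rewrite (Hpieces i x Hi Hx), Hoi. reflexivity.
Qed.

End Unflipping.

Definition translates_right_of (k : R -> R) (x c : R) : Prop :=
  exists d, 0 < d /\ forall t, 0 < t < d -> k (x + t) = x + t + c.

Definition right_shift (k : R -> R) (x : R) : R :=
  epsilon (inhabits 0) (translates_right_of k x).

Definition rc_modification (k : R -> R) (x : R) : R := x + right_shift k x.

Lemma translates_right_of_unique k x c1 c2 :
  translates_right_of k x c1 -> translates_right_of k x c2 -> c1 = c2.
Proof.
  intros [d1 [Hd1 H1]] [d2 [Hd2 H2]].
  pose proof (Rmin_pos d1 d2 Hd1 Hd2). pose proof (Rmin_l d1 d2). pose proof (Rmin_r d1 d2).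
  specialize (H1 (Rmin d1 d2 / 2) ltac:(lra)). specialize (H2 (Rmin d1 d2 / 2) ltac:(lra)).
  lra.
Qed.

Lemma rc_modification_on_piece k l u c x : (forall y, l < y < u -> k y = y + c) ->
  l <= x < u -> rc_modification k x = x + c.
Proof.
  intros Hk Hx. assert (Hc : translates_right_of k x c).
  { exists (u - x). split; [lra|]. intros t Ht. apply Hk. lra. }
  unfold rc_modification, right_shift. f_equal.
  apply (translates_right_of_unique k x); [apply epsilon_spec; exists c|]; exact Hc.
Qed.

Lemma finite_gap_above (L : list R) y b : y < b ->
  exists e, 0 < e /\ y + e < b /\ forall z, In z L -> ~ (y < z <= y + e).
Proof.
  intros Hyb. induction L as [|z L [e [He [Heb HL]]]].
  - exists ((b - y) / 2). repeat split; [lra | lra | intros z []].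
  - destruct (Rlt_or_le y z) as [Hyz|Hzy].
    + exists (Rmin e ((z - y) / 2)).
      pose proof (Rmin_l e ((z - y) / 2)). pose proof (Rmin_r e ((z - y) / 2)).
      split; [apply Rmin_pos; lra|]. split; [lra|].
      intros w [<-|Hw] Hyw; [lra | apply (HL w Hw); lra].
    + exists e. split; [exact He|]. split; [exact Heb|].
      intros w [<-|Hw] Hyw; [lra | exact (HL w Hw Hyw)].
Qed.

Section RightContinuousModification.

Variables (k : R -> R) (n : nat) (a : nat -> R).
Hypothesis Hbij : bijX k.
Hypothesis Hpart : partitionX n a.
Hypothesis Hpieces : forall i, (i < n)%nat ->
  exists c, forall x, a i < x < a (S i) -> k x = x + c.

Lemma rc_modification_at x : inX x -> exists i c, (i < n)%nat /\ a i <= x < a (S i) /\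
  (forall y, a i < y < a (S i) -> k y = y + c) /\
  (forall y, a i <= y < a (S i) -> rc_modification k y = y + c).
Proof.
  intros Hx. destruct (partition_cover n a Hpart x Hx) as [i [Hi Hxi]].
  destruct (Hpieces i Hi) as [c Hc]. exists i, c. repeat split; try tauto.
  intros y Hy. exact (rc_modification_on_piece k _ _ c y Hc Hy).
Qed.

Lemma rc_modification_germ x : inX x -> exists d, 0 < d /\
  forall t, 0 < t < d -> inX (x + t) /\ k (x + t) = rc_modification k x + t.
Proof.
  intros Hx. destruct (rc_modification_at x Hx) as [i [c [Hi [Hxi [Hk Hf]]]]].
  exists (a (S i) - x). split; [lra|]. intros t Ht. split.
  - apply (partition_piece_inX n a Hpart i); [exact Hi | lra].
  - rewrite (Hk (x + t)), (Hf x) by lra. ring.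
Qed.

Lemma rc_modification_inX x : inX x -> inX (rc_modification k x).
Proof.
  intros Hx. destruct (rc_modification_germ x Hx) as [d [Hd Hgerm]].
  destruct (Hgerm (d / 2) ltac:(lra)) as [Hxt Hkt].
  pose proof (bijX_inX k _ Hbij Hxt) as Hin. unfold inX in Hin |- *.
  split; [|lra].
  destruct (Rle_or_lt 0 (rc_modification k x)) as [Hnneg|Hneg]; [exact Hnneg|exfalso].
  pose proof (Rmin_pos d (- rc_modification k x) Hd ltac:(lra)).
  pose proof (Rmin_l d (- rc_modification k x)). pose proof (Rmin_r d (- rc_modification k x)).
  destruct (Hgerm (Rmin d (- rc_modification k x) / 2) ltac:(lra)) as [Hxt' Hkt'].
  pose proof (bijX_inX k _ Hbij Hxt') as Hin'. unfold inX in Hin'. lra.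
Qed.

Lemma rc_modification_inj x y : inX x -> inX y ->
  rc_modification k x = rc_modification k y -> x = y.
Proof.
  intros Hx Hy E.
  destruct (rc_modification_germ x Hx) as [dx [Hdx Hgx]].
  destruct (rc_modification_germ y Hy) as [dy [Hdy Hgy]].
  pose proof (Rmin_pos dx dy Hdx Hdy). pose proof (Rmin_l dx dy). pose proof (Rmin_r dx dy).
  destruct (Hgx (Rmin dx dy / 2) ltac:(lra)) as [Hxt Hkx].
  destruct (Hgy (Rmin dx dy / 2) ltac:(lra)) as [Hyt Hky].
  assert (x + Rmin dx dy / 2 = y + Rmin dx dy / 2)
    by (apply (bijX_inj k); [exact Hbij | exact Hxt | exact Hyt | congruence]).
  lra.
Qed.

(* Take a gap ]y, y + e] avoiding the values of k and of its modification at
   the cut points; k^-1 (y + e) then lies inside a piece, and sliding back along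
   that piece reaches a preimage of y. *)
Lemma rc_modification_surj y : inX y -> exists x, inX x /\ rc_modification k x = y.
Proof.
  intros Hy. set (A := map a (seq 0 n)).
  destruct (finite_gap_above (map (rc_modification k) A ++ map k A) y 1 (proj2 Hy))
    as [e [He [He1 Hgap]]].
  destruct (proj2 (proj2 Hbij) (y + e)) as [z [Hz Hkz]]; [unfold inX in *; lra|].
  destruct (rc_modification_at z Hz) as [i [c [Hi [Hzi [Hk Hf]]]]].
  assert (HAi : In (a i) A) by (apply in_map, in_seq; lia).
  assert (Hlt : a i < z).
  { destruct Hzi as [[Hlt|Heq] _]; [exact Hlt|exfalso].
    apply (Hgap (k (a i))); [apply in_or_app; right; apply in_map, HAi | rewrite Heq; lra]. }
  rewrite (Hk z) in Hkz by lra.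
  assert (Hle : a i + c <= y).
  { destruct (Rle_or_lt (a i + c) y) as [Hle|Hgt]; [exact Hle|exfalso].
    apply (Hgap (rc_modification k (a i))); [apply in_or_app; left; apply in_map, HAi|].
    rewrite (Hf (a i)) by lra. lra. }
  exists (y - c). split.
  - apply (partition_piece_inX n a Hpart i); [exact Hi | lra].
  - rewrite (Hf (y - c)) by lra. ring.
Qed.

Lemma bijX_rc_modification : bijX (rc_modification k).
Proof.
  split; [exact rc_modification_inX | split; [exact rc_modification_inj | exact rc_modification_surj]].
Qed.

Lemma IET_plus_rc_modification : IET_plus_rc (rc_modification k).
Proof.
  split; [split; [exact bijX_rc_modification|]|].
  - exists n, a. split; [exact Hpart|]. intros i Hi. destruct (Hpieces i Hi) as [c Hc].
    exists c. intros x Hx. apply (rc_modification_on_piece k (a i) (a (S i))); [exact Hc | lra].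
  - intros x Hx eps Heps. destruct (rc_modification_at x Hx) as [i [c [Hi [Hxi [_ Hf]]]]].
    exists (Rmin eps (a (S i) - x)). split; [apply Rmin_pos; lra|].
    intros y Hy Hxy. pose proof (Rmin_l eps (a (S i) - x)). pose proof (Rmin_r eps (a (S i) - x)).
    rewrite (Hf y), (Hf x) by lra. replace (y + c - (x + c)) with (y - x) by ring.
    rewrite Rabs_right; lra.
Qed.

Lemma rc_modification_support x : inX x -> rc_modification k x <> k x ->
  In x (map a (seq 0 n)).
Proof.
  intros Hx Hne. destruct (rc_modification_at x Hx) as [i [c [Hi [Hxi [Hk Hf]]]]].
  destruct (Req_dec x (a i)) as [->|Hneq]; [apply in_map, in_seq; lia|].
  exfalso. apply Hne. rewrite (Hf x), (Hk x) by lra. reflexivity.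
Qed.

End RightContinuousModification.

Lemma IET_plus_eq_perm_comp_rc k : IET_plus k -> exists f sigma,
  IET_plus_rc f /\ fin_supp_perm sigma /\ forall x, inX x -> k x = sigma (f x).
Proof.
  intros [Hbij [n [a [Hpart Hpieces]]]].
  exists (rc_modification k), (fun y => k (invX (rc_modification k) y)).
  pose proof (bijX_rc_modification k n a Hbij Hpart Hpieces) as Hf.
  split; [exact (IET_plus_rc_modification k n a Hbij Hpart Hpieces)|]. split.
  - exact (fin_supp_perm_comp_invX _ _ _ Hf Hbij (rc_modification_support k n a Hpart Hpieces)).
  - intros x Hx. rewrite invX_l; auto.
Qed.

Lemma IET_plus_eq_rc_comp_perm k : IET_plus k -> exists g tau,
  IET_plus_rc g /\ fin_supp_perm tau /\ forall x, inX x -> k x = g (tau x).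
Proof.
  intros [Hbij [n [a [Hpart Hpieces]]]].
  exists (rc_modification k), (fun x => invX (rc_modification k) (k x)).
  pose proof (bijX_rc_modification k n a Hbij Hpart Hpieces) as Hf.
  split; [exact (IET_plus_rc_modification k n a Hbij Hpart Hpieces)|]. split.
  - exact (fin_supp_perm_invX_comp _ _ _ Hf Hbij (rc_modification_support k n a Hpart Hpieces)).
  - intros x Hx. symmetry. apply (invX_spec _ _ Hf), (bijX_inX k x Hbij Hx).
Qed.

Lemma IET_bowtie_orientations h : IET_bowtie h ->
  exists n a (o : nat -> bool) (c : nat -> R), partitionX n a /\
    forall i x, (i < n)%nat -> a i < x < a (S i) -> h x = (if o i then - x else x) + c i.
Proof.
  intros [_ [n [a [Hpart Hpieces]]]].
  destruct (choice (fun i (oc : bool * R) => (i < n)%nat ->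
              forall x, a i < x < a (S i) -> h x = (if fst oc then - x else x) + snd oc))
    as [oc Hoc].
  { intros i. destruct (Nat.lt_ge_cases i n) as [Hi|Hi]; [|exists (false, 0); lia].
    destruct (Hpieces i Hi) as [c [Hc|Hc]]; [exists (false, c) | exists (true, c)];
      intros _ x Hx; exact (Hc x Hx). }
  exists n, a, (fun i => fst (oc i)), (fun i => snd (oc i)). split; [exact Hpart|].
  intros i x Hi Hx. exact (Hoc i Hi x Hx).
Qed.

Theorem proposition2p4 (h : R -> R) (Hh : IET_bowtie h) :
  exists (f g r s sigma tau : R -> R),
    IET_plus_rc f /\ IET_plus_rc g /\
    flip_product r /\ flip_product s /\
    fin_supp_perm sigma /\ fin_supp_perm tau /\
    (forall x, inX x -> h x = r (sigma (f x))) /\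
    (forall x, inX x -> h x = g (tau (s x))).
Proof.
  pose proof (proj1 Hh) as Hbij.
  destruct (IET_bowtie_orientations h Hh) as [n [a [o [c [Hpart Hpieces]]]]].
  set (lr := image_flips n a o c). set (ls := domain_flips n a o).
  pose proof (image_flips_valid h n a o c Hbij Hpart Hpieces) as Hlr_valid.
  pose proof (image_flips_disjoint h n a o c Hbij Hpart Hpieces) as Hlr_disj.
  pose proof (domain_flips_valid n a o Hpart) as Hls_valid.
  pose proof (domain_flips_disjoint n a o Hpart) as Hls_disj.
  destruct (IET_plus_eq_perm_comp_rc _ (IET_plus_image_flips_comp h n a o c Hbij Hpart Hpieces))
    as [f [sigma [Hf [Hsigma Ef]]]].
  destruct (IET_plus_eq_rc_comp_perm _ (IET_plus_comp_domain_flips h n a o c Hbij Hpart Hpieces))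
    as [g [tau [Hg [Htau Eg]]]].
  exists f, g, (flips_prod lr), (flips_prod ls), sigma, tau.
  split; [exact Hf|]. split; [exact Hg|].
  split; [exists lr; split; [exact Hlr_valid | reflexivity]|].
  split; [exists ls; split; [exact Hls_valid | reflexivity]|].
  split; [exact Hsigma|]. split; [exact Htau|]. split.
  - intros x Hx. rewrite <- Ef by exact Hx. symmetry. exact (flips_prod_involutive lr _ Hlr_disj).
  - intros x Hx. rewrite <- Eg by exact (flips_prod_inX ls x Hls_valid Hls_disj Hx).
    f_equal. symmetry. exact (flips_prod_involutive ls x Hls_disj).
Qed.
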